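(* Let $\eta,\lambda>0$ with $\eta\lambda\le\tfrac12$, $x(0)\neq0$, and $x(t+1)=(1-\eta\lambda)x(t)-\eta\nabla L(x(t))$. Let $$I=\{T'\in\mathbb{N}: \forall\,0\le t\le T',\ \|x(t)\|_2^2\le\pi^2\rho\eta\ \text{ and }\ \|\nabla L(\bar x(t))\|_2^2>8\pi^4\rho^2\lambda\eta\}.$$ Suppose $0\in I$. Then $I$ is finite, and with $T:=\max I$ we have $T\le\frac{1}{6\lambda\eta}$ and $$\|x(T+1)\|_2^2\le\frac{2(\pi^2\rho\eta)^2}{\|x(0)\|_2^2}.$$
   Context: $L:\mathbb{R}^d\setminus\{0\}\to\mathbb{R}$ is $C^2$ and scale invariant, i.e. $L(cx)=L(x)$ for all $c>0$, $x\ne0$. $\rho:=\max_{\|x\|_2=1}\|\nabla^2L(x)\|_2>0$ (spectral norm). For $x\neq0$, $\bar x:=x/\|x\|_2$. *)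

From HB Require Import structures.
From mathcomp Require Import all_boot all_order all_algebra.
From mathcomp Require Import all_classical all_reals all_analysis.
Set Implicit Arguments. Unset Strict Implicit. Unset Printing Implicit Defensive.
Import Order.TTheory GRing.Theory Num.Theory.
Import numFieldNormedType.Exports.
Local Open Scope classical_set_scope.
Local Open Scope ring_scope.

Section Defs.
Variables (R : realType) (d : nat).

Definition sqn (v : 'rV[R]_d) : R := \sum_(i < d) (v 0 i) ^+ 2.
Definition enorm (v : 'rV[R]_d) : R := Num.sqrt (sqn v).

Definition xbar (v : 'rV[R]_d) : 'rV[R]_d := (enorm v)^-1 *: v.

Definition evec (i : 'I_d) : 'rV[R]_d := delta_mx 0 i.

Definition grad (L : 'rV[R]_d -> R) (x : 'rV[R]_d) : 'rV[R]_d :=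
  \row_i ('D_(evec i) L x).

Definition hess (L : 'rV[R]_d -> R) (x : 'rV[R]_d) : 'M[R]_d :=
  \matrix_(i, j) ('D_(evec j) (fun y => grad L y 0 i) x).

Definition C2_off0 (L : 'rV[R]_d -> R) : Prop :=
  forall x : 'rV[R]_d, x != 0 ->
    differentiable L x /\
    (forall i : 'I_d, differentiable (fun y => grad L y 0 i) x) /\
    (forall i j : 'I_d, {for x, continuous (fun y => hess L y i j)}).

Definition scale_invariant (L : 'rV[R]_d -> R) : Prop :=
  forall (c : R) (x : 'rV[R]_d), 0 < c -> x != 0 -> L (c *: x) = L x.

Definition specnorm (A : 'M[R]_d) : R :=
  sup [set enorm (A *m v^T)^T | v in [set v : 'rV[R]_d | enorm v = 1]].

(* rho := max over the unit sphere of the spectral norm of the Hessian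
   (stated as the maximum: an upper bound which is attained) *)
Definition is_rho (L : 'rV[R]_d -> R) (rho : R) : Prop :=
  (forall x : 'rV[R]_d, enorm x = 1 -> specnorm (hess L x) <= rho) /\
  (exists x : 'rV[R]_d, enorm x = 1 /\ specnorm (hess L x) = rho).

End Defs.

From HB Require Import structures.
From mathcomp Require Import all_boot all_order all_algebra.
From mathcomp Require Import all_classical all_reals all_analysis.
From mathcomp Require Import ring lra.
Set Implicit Arguments. Unset Strict Implicit. Unset Printing Implicit Defensive.
Import Order.TTheory GRing.Theory Num.Theory.
Import numFieldNormedType.Exports.
Local Open Scope ring_scope.

(* Scale invariance gives Euler's identity [dot x (grad L x) = 0] and
   [grad L (c x) = c^-1 grad L x], so one step of the iteration sends the
   squared norm [N] to [(1 - eta lam)^2 N + eta^2 |grad L (xbar x)|^2 / N].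
   While [x t] stays in [I] the gradient term beats the decay, and [N] grows
   by at least [6 pi^2 rho lam eta^2] per step; as [N <= pi^2 rho eta] in [I],
   the phase lasts at most [1 / (6 lam eta)] steps.  The final estimate uses
   [|grad L| <= 2 pi rho <= pi^2 rho] on the unit sphere, obtained by
   following the slope of [L] once around a great circle. *)

Section Euclid.
Variables (R : realType) (d : nat).
Implicit Types (p q v : 'rV[R]_d).

Definition dot p q : R := \sum_(i < d) p 0 i * q 0 i.

Lemma sqn_dot p : sqn p = dot p p.
Proof. by apply: eq_bigr => i _; rewrite expr2. Qed.

Lemma dotC p q : dot p q = dot q p.
Proof. by apply: eq_bigr => i _; rewrite mulrC. Qed.

Lemma dotZl c p q : dot (c *: p) q = c * dot p q.
Proof. by rewrite /dot mulr_sumr; apply: eq_bigr => i _; rewrite mxE mulrA. Qed.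

Lemma dotNl p q : dot (- p) q = - dot p q.
Proof. by rewrite -scaleN1r dotZl mulN1r. Qed.

Lemma sqn_ge0 p : 0 <= sqn p.
Proof. by apply: sumr_ge0 => i _; rewrite sqr_ge0. Qed.

Lemma sqr_coord_le_sqn p i : p 0 i ^+ 2 <= sqn p.
Proof. by rewrite /sqn (bigD1 i) //= lerDl sumr_ge0 // => j _; rewrite sqr_ge0. Qed.

Lemma sqn_eq0 p : (sqn p == 0) = (p == 0).
Proof.
apply/idP/idP => [/eqP p0|/eqP ->]; last first.
  by rewrite /sqn big1 // => i _; rewrite mxE expr0n.
apply/eqP/rowP => i; rewrite mxE; apply/eqP.
by rewrite -sqrf_eq0 eq_le sqr_ge0 andbT -p0 sqr_coord_le_sqn.
Qed.

Lemma sqn_gt0 p : p != 0 -> 0 < sqn p.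
Proof. by move=> p0; rewrite lt_def sqn_eq0 p0 sqn_ge0. Qed.

Lemma sqnZ c p : sqn (c *: p) = c ^+ 2 * sqn p.
Proof. by rewrite !sqn_dot dotZl dotC dotZl mulrA -expr2. Qed.

Lemma sqnN p : sqn (- p) = sqn p.
Proof. by rewrite -scaleN1r sqnZ sqrrN expr1n mul1r. Qed.

Lemma sqnD p q : sqn (p + q) = sqn p + sqn q + 2 * dot p q.
Proof.
rewrite /sqn /dot mulr_sumr -!big_split /=; apply: eq_bigr => i _.
by rewrite mxE sqrrD; ring.
Qed.

Lemma sqnB p q : sqn (p - q) = sqn p + sqn q - 2 * dot p q.
Proof. by rewrite sqnD sqnN dotC dotNl dotC mulrN. Qed.

Lemma sqr_enorm p : enorm p ^+ 2 = sqn p.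
Proof. by rewrite sqr_sqrtr // sqn_ge0. Qed.

Lemma enorm_ge0 p : 0 <= enorm p.
Proof. exact: sqrtr_ge0. Qed.

Lemma enorm_gt0 p : p != 0 -> 0 < enorm p.
Proof. by move=> p0; rewrite sqrtr_gt0 sqn_gt0. Qed.

Lemma enorm0 : enorm (0 : 'rV[R]_d) = 0.
Proof. by rewrite /enorm (eqP (_ : sqn 0 == 0)) ?sqrtr0 ?sqn_eq0. Qed.

Lemma enorm_sqn1 v : sqn v = 1 -> enorm v = 1.
Proof. by rewrite /enorm => ->; rewrite sqrtr1. Qed.

Lemma sqn_xbar p : p != 0 -> sqn (xbar p) = 1.
Proof. by move=> p0; rewrite sqnZ exprVn sqr_enorm mulVf // sqn_eq0. Qed.

Lemma xbar_neq0 p : p != 0 -> xbar p != 0.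
Proof. by move=> p0; rewrite -sqn_eq0 sqn_xbar // oner_eq0. Qed.

Lemma scale_enorm_xbar p : p != 0 -> enorm p *: xbar p = p.
Proof. by move=> p0; rewrite scalerA mulfV ?scale1r // gt_eqF // enorm_gt0. Qed.

Lemma dot_xbar p : p != 0 -> dot (xbar p) p = enorm p.
Proof.
move=> p0; rewrite /xbar dotZl -sqn_dot -sqr_enorm expr2 mulKf //.
by rewrite gt_eqF // enorm_gt0.
Qed.

Lemma sqr_dot_le p q : dot p q ^+ 2 <= sqn p * sqn q.
Proof.
have [->|q0] := eqVneq q 0.
  by rewrite /dot big1 ?expr0n ?mulr_ge0 ?sqn_ge0 // => i _; rewrite mxE mulr0.
have q_gt0 := sqn_gt0 q0.
have := sqn_ge0 (sqn q *: p - dot p q *: q).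
rewrite sqnB !sqnZ dotZl (dotC p (_ *: _)) dotZl (dotC q p) => h.
have : 0 <= sqn q * (sqn p * sqn q - dot p q ^+ 2) by nra.
by rewrite pmulr_rge0 // subr_ge0.
Qed.

Lemma normr_dot_le p q : `|dot p q| <= enorm p * enorm q.
Proof.
rewrite -(ler_pXn2r (_ : 0 < 2)%N) ?nnegrE ?mulr_ge0 ?enorm_ge0 //.
by rewrite real_normK ?num_real // exprMn !sqr_enorm sqr_dot_le.
Qed.

Lemma normr_coord_le1 v i : sqn v = 1 -> `|v 0 i| <= 1.
Proof.
move=> v1; rewrite -(ler_pXn2r (_ : 0 < 2)%N) ?nnegrE // expr1n.
by rewrite real_normK ?num_real // -v1 sqr_coord_le_sqn.
Qed.

Lemma mulmx_coord (A : 'M[R]_d) v i :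
  (A *m v^T)^T 0 i = \sum_(k < d) A i k * v 0 k.
Proof. by rewrite !mxE; apply: eq_bigr => k _; rewrite mxE. Qed.

Lemma enorm_mulmx_le_specnorm (A : 'M[R]_d) v :
  enorm v = 1 -> enorm (A *m v^T)^T <= specnorm A.
Proof.
move=> v1; apply: sup_upper_bound; last by exists v.
split; first by exists (enorm (A *m v^T)^T), v.
exists (Num.sqrt (\sum_(i < d) (\sum_(k < d) `|A i k|) ^+ 2)).
move=> _ [w /= w1 <-]; rewrite ler_sqrt; last first.
  by rewrite sumr_ge0 // => i _; rewrite sqr_ge0.
have {}w1 : sqn w = 1 by rewrite -sqr_enorm w1 expr1n.
apply: ler_sum => i _; rewrite mulmx_coord -real_normK ?num_real //.
rewrite ler_pXn2r ?nnegrE ?sumr_ge0 //.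
apply: le_trans (ler_norm_sum _ _ _) _; apply: ler_sum => k _.
by rewrite normrM ler_piMr ?normr_coord_le1.
Qed.

End Euclid.

Section RowDerive.
Variables (R : realType) (d : nat).

Lemma is_derive_coord (F : R -> 'rV[R]_d) (t : R) (F' : 'rV[R]_d) (j : 'I_d) :
  is_derive t 1 F F' -> is_derive t 1 (fun s => F s 0 j) (F' 0 j).
Proof.
move=> dF; have dFt : derivable F t 1 by case: dF.
have /derivable_mxP/(_ 0 j) dFj := dFt.
apply: DeriveDef => //.
by rewrite -(@derive_val _ _ _ _ _ _ _ dF) derive_mx // mxE.
Qed.

Lemma is_derive_row (F : R -> 'rV[R]_d) (t : R) (F' : 'rV[R]_d) :
  (forall j, is_derive t 1 (fun s => F s 0 j) (F' 0 j)) -> is_derive t 1 F F'.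
Proof.
move=> dF; have dFt : derivable F t 1.
  by apply/derivable_mxP => i j; rewrite ord1; case: (dF j).
apply: DeriveDef => //; rewrite derive_mx //; apply/rowP => j.
by rewrite mxE; exact: derive_val.
Qed.

Lemma is_derive_dot (p q : R -> 'rV[R]_d) (t : R) (p' q' : 'rV[R]_d) :
  is_derive t 1 p p' -> is_derive t 1 q q' ->
  is_derive t 1 (fun s => dot (p s) (q s)) (dot p' (q t) + dot (p t) q').
Proof.
move=> dp dq.
have -> : (fun s => dot (p s) (q s)) =
    \sum_(j < d) ((fun s => p s 0 j) * (fun s => q s 0 j)).
  by rewrite fct_sumE.
apply: is_derive_eq.
  by apply: is_derive_sum => j; apply: is_deriveM; apply: is_derive_coord.
rewrite /dot -big_split /=; apply: eq_bigr => j _.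
by rewrite /GRing.scale /=; ring.
Qed.

Lemma derive_evec_sum (g : 'rV[R]_d -> R) p v : differentiable g p ->
  'D_v g p = \sum_(j < d) v 0 j * 'D_(evec R j) g p.
Proof.
move=> dg; rewrite deriveE //.
under eq_bigr do rewrite deriveE //.
rewrite {1}(row_sum_delta v) linear_sum; apply: eq_bigr => j _.
by rewrite linearZ.
Qed.

Lemma is_derive_comp_diff (g : 'rV[R]_d -> R) (c : R -> 'rV[R]_d) (t : R)
    (c' : 'rV[R]_d) : differentiable g (c t) -> is_derive t 1 c c' ->
  is_derive t 1 (g \o c) ('D_c' g (c t)).
Proof.
move=> dg dc.
have dct : differentiable c t by apply/derivable1_diffP; case: dc.
have dgc : differentiable (g \o c) t by apply: differentiable_comp.
apply: DeriveDef; first exact: diff_derivable.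
rewrite deriveE // diff_comp //= -(deriveE _ dct) (@derive_val _ _ _ _ _ _ _ dc).
by rewrite deriveE.
Qed.

End RowDerive.

Section ScaleInvariant.
Variables (R : realType) (d : nat) (L : 'rV[R]_d -> R).
Hypotheses (L_si : scale_invariant L) (L_C2 : C2_off0 L).

Let L_scale c y : 0 < c -> L (c *: y) = L y.
Proof. by move=> c_gt0; have [->|y0] := eqVneq y 0; [rewrite scaler0|apply: L_si]. Qed.

Lemma derive_grad p v : p != 0 -> 'D_v L p = dot v (grad L p).
Proof.
move=> p0; rewrite derive_evec_sum; last exact: (L_C2 p0).1.
by apply: eq_bigr => j _; rewrite mxE.
Qed.

Lemma is_derive_L_comp (c : R -> 'rV[R]_d) (t : R) (c' : 'rV[R]_d) : c t != 0 ->
  is_derive t 1 c c' -> is_derive t 1 (L \o c) (dot c' (grad L (c t))).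
Proof.
by move=> ct0 dc; rewrite -derive_grad //; apply: is_derive_comp_diff (L_C2 ct0).1 dc.
Qed.

Lemma is_derive_grad_comp (c : R -> 'rV[R]_d) (t : R) (c' : 'rV[R]_d) : c t != 0 ->
  is_derive t 1 c c' -> is_derive t 1 (grad L \o c) (hess L (c t) *m c'^T)^T.
Proof.
move=> ct0 dc; apply: is_derive_row => i.
have dgi := (L_C2 ct0).2.1 i.
apply: is_derive_eq (is_derive_comp_diff dgi dc) _.
rewrite mulmx_coord derive_evec_sum //.
by apply: eq_bigr => k _; rewrite mulrC mxE.
Qed.

(* Euler's identity: [L] is homogeneous of degree 0. *)
Lemma dot_grad_self v : v != 0 -> dot v (grad L v) = 0.
Proof.
move=> v0; pose ray (s : R) := s *: v.
have dray : is_derive (1 : R) 1 ray v.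
  apply: is_derive_row => j.
  have -> : (fun s => ray s 0 j) = v 0 j \*: id.
    by apply/funext => s; rewrite /ray mxE mulrC.
  apply: is_derive_eq (is_deriveZ _ (is_derive_id _ _)) _.
  by rewrite /GRing.scale /= mulr1.
have dconst : is_derive (1 : R) 1 (L \o ray) 0.
  apply: near_eq_is_derive (is_derive_cst (L v) (1 : R) 1).
  apply: filterS (Nlt_nbhsl (ltrN10 R)) => s; rewrite oppr_lt0 => s_gt0.
  by rewrite /= /ray L_scale.
have ray1 : ray 1 != 0 by rewrite /ray scale1r.
have := @derive_val _ _ _ _ _ _ _ (is_derive_L_comp ray1 dray).
by rewrite (@derive_val _ _ _ _ _ _ _ dconst) /ray scale1r.
Qed.

Lemma grad_scale c p : 0 < c -> p != 0 -> grad L (c *: p) = c^-1 *: grad L p.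
Proof.
move=> c_gt0 p0; have dLp := (L_C2 p0).1; apply/rowP => i; rewrite !mxE.
have L_eq : L = L \o ( *:%R c^-1).
  by apply/funext => y /=; rewrite L_scale ?invr_gt0.
have dL : differentiable L (c^-1 *: (c *: p)).
  by rewrite scalerA mulVf ?gt_eqF // scale1r.
rewrite {1}L_eq deriveE; last exact: differentiable_comp.
rewrite diff_comp // diff_val /= scalerA mulVf ?gt_eqF // scale1r.
by rewrite linearZ deriveE.
Qed.

Lemma sqn_gd_step a eta p : p != 0 ->
  sqn (a *: p - eta *: grad L p) =
  a ^+ 2 * sqn p + eta ^+ 2 * sqn (grad L (xbar p)) / sqn p.
Proof.
move=> p0; rewrite sqnB !sqnZ dotZl (dotC p) dotZl dotC dot_grad_self //.
have -> : grad L p = (enorm p)^-1 *: grad L (xbar p).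
  by rewrite -{1}(scale_enorm_xbar p0) grad_scale ?enorm_gt0 ?xbar_neq0.
by rewrite sqnZ exprVn sqr_enorm; ring.
Qed.

End ScaleInvariant.

Section GreatCircle.
Variables (R : realType) (d : nat).
Implicit Types (a b : 'rV[R]_d).

Definition circle a b (t : R) : 'rV[R]_d := cos t *: a + sin t *: b.

Lemma is_derive_circle a b (t : R) : is_derive t 1 (circle a b) (circle b (- a) t).
Proof.
apply: is_derive_row => j.
have -> : (fun s => circle a b s 0 j) = cos * cst (a 0 j) + sin * cst (b 0 j).
  by apply/funext => s; rewrite !mxE.
apply: is_derive_eq (is_deriveD
  (is_deriveM (is_derive_cos t) (is_derive_cst (a 0 j) t 1))
  (is_deriveM (is_derive_sin t) (is_derive_cst (b 0 j) t 1))) _.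
by rewrite !mxE /GRing.scale /=; ring.
Qed.

Lemma circle_opp a b t : circle (- a) (- b) t = - circle a b t.
Proof. by rewrite /circle !scalerN opprD. Qed.

Lemma sqn_circle a b t : sqn a = 1 -> sqn b = 1 -> dot a b = 0 ->
  sqn (circle a b t) = 1.
Proof.
move=> a1 b1 ab0; rewrite sqnD !sqnZ a1 b1 dotZl dotC dotZl dotC ab0.
by rewrite !mulr0 !mulr1 addr0 cos2Dsin2.
Qed.

Lemma circle0 a b : circle a b 0 = a.
Proof. by rewrite /circle cos0 sin0 scale1r scale0r addr0. Qed.

Lemma circle2pi a b : circle a b (pi *+ 2) = a.
Proof. by rewrite /circle cos2pi sin2pi scale1r scale0r addr0. Qed.

End GreatCircle.

Section GradientBound.
Variables (R : realType) (d : nat) (L : 'rV[R]_d -> R) (rho : R).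
Hypotheses (L_si : scale_invariant L) (L_C2 : C2_off0 L) (L_rho : is_rho L rho).

Section CircleSlope.
Variables a u : 'rV[R]_d.
Hypotheses (a1 : sqn a = 1) (u1 : sqn u = 1) (au : dot a u = 0).

Let circle_neq0 t : circle a u t != 0.
Proof. by rewrite -sqn_eq0 sqn_circle // oner_eq0. Qed.

Let enorm_tangent t : enorm (circle u (- a) t) = 1.
Proof. by rewrite enorm_sqn1 // sqn_circle ?sqnN // dotC dotNl au oppr0. Qed.

Lemma is_derive_L_circle (t : R) : is_derive t 1 (L \o circle a u)
  (dot (circle u (- a) t) (grad L (circle a u t))).
Proof. exact: (is_derive_L_comp L_C2 (circle_neq0 t) (is_derive_circle a u t)). Qed.

(* The derivative of the tangent is [- circle a u t], whose pairing with the
   gradient vanishes by Euler's identity. *)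
Lemma is_derive_slope_circle (t : R) :
  is_derive t 1 (fun s => dot (circle u (- a) s) (grad L (circle a u s)))
    (dot (circle u (- a) t) (hess L (circle a u t) *m (circle u (- a) t)^T)^T).
Proof.
apply: is_derive_eq (is_derive_dot (is_derive_circle u (- a) t)
  (is_derive_grad_comp L_C2 (circle_neq0 t) (is_derive_circle a u t))) _.
by rewrite circle_opp dotNl (dot_grad_self L_si L_C2 (circle_neq0 t)) oppr0 add0r.
Qed.

Lemma hessian_form_circle_le (t : R) :
  `|dot (circle u (- a) t) (hess L (circle a u t) *m (circle u (- a) t)^T)^T| <= rho.
Proof.
apply: le_trans (normr_dot_le _ _) _; rewrite enorm_tangent mul1r.
apply: le_trans (enorm_mulmx_le_specnorm _ (enorm_tangent t)) (L_rho.1 _ _).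
by rewrite enorm_sqn1 // sqn_circle.
Qed.

End CircleSlope.

(* Go once around the great circle through [a] in the direction of the
   gradient: by Rolle the slope of [L] vanishes somewhere, and the slope
   varies at rate at most [rho]. *)
Lemma enorm_grad_le a : 0 < rho -> sqn a = 1 -> enorm (grad L a) <= pi *+ 2 * rho.
Proof.
move=> rho_gt0 a1; have a0 : a != 0 by rewrite -sqn_eq0 a1 oner_eq0.
have pi2_gt0 : 0 < pi *+ 2 :> R by rewrite mulrn_wgt0 // pi_gt0.
set g := grad L a.
have [->|g0] := eqVneq g 0; first by rewrite enorm0 mulr_ge0 // ltW.
pose u := xbar g.
have u1 : sqn u = 1 := sqn_xbar g0.
have au : dot a u = 0 by rewrite /u /xbar dotC dotZl dotC dot_grad_self // mulr0.
pose h t := dot (circle u (- a) t) (grad L (circle a u t)).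
pose h' t := dot (circle u (- a) t) (hess L (circle a u t) *m (circle u (- a) t)^T)^T.
have dL (t : R) : is_derive t 1 (L \o circle a u) (h t) := is_derive_L_circle a1 u1 au t.
have dh (t : R) : is_derive t 1 h (h' t) := is_derive_slope_circle a1 u1 au t.
have L_der t : derivable (L \o circle a u) t 1 by have [] := dL t.
have [c] : exists2 c, c \in `]0, pi *+ 2[ & is_derive c 1 (L \o circle a u) 0.
  apply: Rolle pi2_gt0 (fun t _ => L_der t) _ _.
    exact: derivable_within_continuous (fun t _ => L_der t).
  by rewrite /= circle0 circle2pi.
rewrite in_itv /= => /andP[c_gt0 c_lt] dc0.
have hc : h c = 0.
  by rewrite -(@derive_val _ _ _ _ _ _ _ (dL c)) (@derive_val _ _ _ _ _ _ _ dc0).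
have [xi _] : exists2 xi, xi \in `[0, c] & h c - h 0 = h' xi * (c - 0).
  apply: MVT_segment (ltW c_gt0) (fun t _ => dh t) _.
  by apply: derivable_within_continuous => t _; have [] := dh t.
have -> : h 0 = enorm g by rewrite /h !circle0 dot_xbar.
rewrite hc sub0r subr0 => /(canRL (@opprK _)) ->.
have := ler_norm (- h' xi); rewrite normrN => hn.
have := hessian_form_circle_le a1 u1 au xi; nra.
Qed.

Lemma sqn_grad_le a : 0 < rho -> sqn a = 1 -> sqn (grad L a) <= (pi ^+ 2 * rho) ^+ 2.
Proof.
move=> rho_gt0 a1; have pi_ge2 := @pi_ge2 R.
have hg : enorm (grad L a) <= pi ^+ 2 * rho.
  by apply: le_trans (enorm_grad_le rho_gt0 a1) _; rewrite ler_pM2r // mulr2n expr2; nra.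
have := enorm_ge0 (grad L a); rewrite -sqr_enorm; nra.
Qed.

End GradientBound.

Section GradientDescentArithmetic.
Variable R : realType.

Lemma gd_step_growth (s eta lam N G : R) : 0 < s -> 0 < eta -> 0 < lam ->
  0 < N -> N <= s * eta -> 8 * s ^+ 2 * lam * eta < G ->
  N + 6 * s * lam * eta ^+ 2 <= (1 - eta * lam) ^+ 2 * N + eta ^+ 2 * G / N.
Proof.
move=> s_gt0 eta_gt0 lam_gt0 N_gt0 N_le G_gt.
have el : 0 <= eta * lam := mulr_ge0 (ltW eta_gt0) (ltW lam_gt0).
have k : 0 <= s * lam * eta ^+ 2 :=
  mulr_ge0 (mulr_ge0 (ltW s_gt0) (ltW lam_gt0)) (sqr_ge0 eta).
have grad_term : 8 * s * lam * eta ^+ 2 <= eta ^+ 2 * G / N.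
  have h1 : 0 <= eta ^+ 2 * (G - 8 * s ^+ 2 * lam * eta).
    by rewrite mulr_ge0 ?sqr_ge0 // subr_ge0 ltW.
  have h2 : 0 <= s * lam * eta ^+ 2 * (s * eta - N) by rewrite mulr_ge0 // subr_ge0.
  rewrite ler_pdivlMr //; nra.
have decay_term : N - 2 * s * lam * eta ^+ 2 <= (1 - eta * lam) ^+ 2 * N.
  have h3 : 0 <= (eta * lam) ^+ 2 * N by rewrite mulr_ge0 ?sqr_ge0 // ltW.
  have h4 : 0 <= eta * lam * (s * eta - N) by rewrite mulr_ge0 // subr_ge0.
  nra.
lra.
Qed.

Lemma gd_exit_bound (s eta lam N0 N G : R) : 0 <= eta * lam <= 1 ->
  0 < N0 -> N0 <= N -> N <= s * eta -> G <= s ^+ 2 ->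
  (1 - eta * lam) ^+ 2 * N + eta ^+ 2 * G / N <= 2 * (s * eta) ^+ 2 / N0.
Proof.
move=> /andP[el_ge0 el_le1] N0_gt0 N0_le N_le G_le.
have N_gt0 : 0 < N := lt_le_trans N0_gt0 N0_le.
have decay_term : (1 - eta * lam) ^+ 2 * N <= (s * eta) ^+ 2 / N0.
  have b_ge0 : 0 <= 1 - eta * lam by lra.
  have b_le1 : 1 - eta * lam <= 1 by lra.
  have sq_le1 : (1 - eta * lam) ^+ 2 <= 1 by rewrite expr2 mulr_ile1.
  have NN0 : N * N0 <= (s * eta) ^+ 2 by nra.
  have NN0_ge0 : 0 <= N * N0 by rewrite mulr_ge0 // ltW.
  rewrite ler_pdivlMr //; nra.
have grad_term : eta ^+ 2 * G / N <= (s * eta) ^+ 2 / N0.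
  have e1 : 0 <= eta ^+ 2 * N0 by rewrite mulr_ge0 ?sqr_ge0 // ltW.
  have e2 : 0 <= (s * eta) ^+ 2 := sqr_ge0 _.
  rewrite ler_pdivlMr // mulrAC ler_pdivrMr //; nra.
lra.
Qed.

End GradientDescentArithmetic.

Section Trajectory.
Variables (R : realType) (d : nat) (L : 'rV[R]_d -> R) (rho eta lam : R).
Variable x : nat -> 'rV[R]_d.
Hypotheses (L_si : scale_invariant L) (L_C2 : C2_off0 L) (L_rho : is_rho L rho).
Hypotheses (rho_gt0 : 0 < rho) (eta_gt0 : 0 < eta) (lam_gt0 : 0 < lam).
Hypothesis eta_lam_le : eta * lam <= 1 / 2.
Hypothesis x0_neq0 : x 0%N != 0.
Hypothesis x_succ : forall t, x t.+1 = (1 - eta * lam) *: x t - eta *: grad L (x t).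

Local Notation s := (pi ^+ 2 * rho).

Let s_gt0 : 0 < s.
Proof. by rewrite mulr_gt0 // exprn_gt0 // pi_gt0. Qed.

Let gain_ge0 : 0 <= 6 * s * lam * eta ^+ 2 :=
  mulr_ge0 (mulr_ge0 (mulr_ge0 (ler0n R 6) (ltW s_gt0)) (ltW lam_gt0)) (sqr_ge0 eta).

Definition admissible (T : nat) : Prop := forall t, (t <= T)%N ->
  sqn (x t) <= pi ^+ 2 * rho * eta /\
  8 * pi ^+ 4 * rho ^+ 2 * lam * eta < sqn (grad L (xbar (x t))).

Lemma sqn_x_succ t : x t != 0 -> sqn (x t.+1) =
  (1 - eta * lam) ^+ 2 * sqn (x t) + eta ^+ 2 * sqn (grad L (xbar (x t))) / sqn (x t).
Proof. by move=> xt0; rewrite x_succ sqn_gd_step. Qed.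

Lemma admissible_growth T : admissible T -> forall t, (t <= T)%N ->
  x t != 0 /\ sqn (x 0%N) + t%:R * (6 * s * lam * eta ^+ 2) <= sqn (x t).
Proof.
move=> IT; elim=> [|t IH] tT; first by rewrite mul0r addr0.
have [xt0 grow] := IH (ltnW tT).
have [N_le G_gt] := IT t (ltnW tT).
have G_gt' : 8 * s ^+ 2 * lam * eta < sqn (grad L (xbar (x t))).
  by rewrite (_ : 8 * s ^+ 2 * lam * eta = 8 * pi ^+ 4 * rho ^+ 2 * lam * eta) //; ring.
have := gd_step_growth s_gt0 eta_gt0 lam_gt0 (sqn_gt0 xt0) N_le G_gt'.
rewrite -sqn_x_succ // => step.
have N0_gt0 := sqn_gt0 x0_neq0; have tk_ge0 := mulr_ge0 (ler0n R t) gain_ge0.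
have k_ge0 := gain_ge0.
split; last by rewrite -natr1 mulrDl mul1r; lra.
by rewrite -sqn_eq0 gt_eqF //; lra.
Qed.

Lemma admissible_length T : admissible T -> T%:R <= 1 / (6 * lam * eta).
Proof.
move=> IT; have [_ grow] := admissible_growth IT (leqnn T).
have [N_le _] := IT T (leqnn T).
have N0_gt0 := sqn_gt0 x0_neq0.
have seta_gt0 : 0 < s * eta := mulr_gt0 s_gt0 eta_gt0.
have c_gt0 : 0 < 6 * lam * eta by rewrite !mulr_gt0.
rewrite ler_pdivlMr //.
have : T%:R * (6 * lam * eta) * (s * eta) < 1 * (s * eta).
  rewrite mul1r (_ : _ * (s * eta) = T%:R * (6 * s * lam * eta ^+ 2)); last by ring.
  lra.
by rewrite ltr_pM2r // => /ltW.
Qed.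

Lemma admissible_max : admissible 0 ->
  exists T, admissible T /\ forall T', admissible T' -> (T' <= T)%N.
Proof.
move=> I0; pose P n := `[< admissible n >].
have exP : exists n, P n by exists 0%N; apply/asboolP.
have ubP n : P n -> (n <= Num.truncn (1 / (6 * lam * eta)))%N.
  move=> /asboolP In; rewrite -ltnS -(ltr_nat R).
  exact: le_lt_trans (admissible_length In) (truncnS_gt _).
have [T /asboolP IT maxT] := ex_maxnP exP ubP.
by exists T; split => // T' /asboolP /maxT.
Qed.

Lemma sqn_exit T : admissible T ->
  sqn (x T.+1) <= 2 * (s * eta) ^+ 2 / sqn (x 0%N).
Proof.
move=> IT; have [xT0 grow] := admissible_growth IT (leqnn T).
have [N_le _] := IT T (leqnn T).
have Tk_ge0 := mulr_ge0 (ler0n R T) gain_ge0.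
rewrite sqn_x_succ //; apply: (gd_exit_bound _ _ _ N_le).
- apply/andP; split; first exact: mulr_ge0 (ltW eta_gt0) (ltW lam_gt0).
  by apply: le_trans eta_lam_le _; rewrite ler_pdivrMr //; lra.
- exact: sqn_gt0.
- lra.
- exact: (sqn_grad_le L_si L_C2 L_rho rho_gt0 (sqn_xbar xT0)).
Qed.

End Trajectory.

Unset Implicit Arguments.

Theorem mainTheorem11 (R : realType) (d : nat) (L : 'rV[R]_d -> R) (rho : R)
  (eta lam : R) (x : nat -> 'rV[R]_d) :
  scale_invariant L -> C2_off0 L -> is_rho L rho -> 0 < rho ->
  0 < eta -> 0 < lam -> eta * lam <= 1 / 2 ->
  x 0%N != 0 ->
  (forall t : nat, x t.+1 = (1 - eta * lam) *: x t - eta *: grad L (x t)) ->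
  let I := fun T' : nat => forall t : nat, (t <= T')%N ->
      sqn (x t) <= pi ^+ 2 * rho * eta /\
      8 * pi ^+ 4 * rho ^+ 2 * lam * eta < sqn (grad L (xbar (x t))) in
  I 0%N ->
  exists T : nat,
    [/\ I T, (forall T' : nat, I T' -> (T' <= T)%N),
        T%:R <= 1 / (6 * lam * eta) &
        sqn (x T.+1) <= 2 * (pi ^+ 2 * rho * eta) ^+ 2 / sqn (x 0%N)].
Proof.
move=> L_si L_C2 L_rho rho_gt0 eta_gt0 lam_gt0 eta_lam_le x0_neq0 x_succ I I0.
have [T [IT T_max]] :=
  admissible_max L_si L_C2 rho_gt0 eta_gt0 lam_gt0 x0_neq0 x_succ I0.
exists T; split => //.
- exact: (admissible_length L_si L_C2 rho_gt0 eta_gt0 lam_gt0 x0_neq0 x_succ IT).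
- exact: (sqn_exit L_si L_C2 L_rho rho_gt0 eta_gt0 lam_gt0 eta_lam_le
    x0_neq0 x_succ IT).
Qed.
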